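(* Let $p$ and $q$ be $n$-ary terms in the language $\{\wedge,\circ,+\}$ with $p$ $+$-free. A variety $\mathcal{V}$ satisfies $p\le q$ over compatible reflexive relations (i.e. $p(R_1,\dots,R_n)\subseteq q(R_1,\dots,R_n)$ for all $\mathbf{A}\in\mathcal{V}$ and all $R_1,\dots,R_n\in\mathrm{Crr}(\mathbf{A})$) if and only if there exists an integer $k\ge 2$ such that $\mathcal{V}$ realizes the set of equations $\mathrm{Eq}^R(p\le q^{(k)})$. Moreover, if $q$ is $+$-free, then $\mathcal{V}$ satisfies $p\le q$ over compatible reflexive relations if and only if $\mathcal{V}$ realizes $\mathrm{Eq}^R(p\le q)$.
   Context: $\mathrm{Crr}(\mathbf{A})$ is the set of compatible reflexive binary relations of $\mathbf{A}$. For relations $R,T$ and $k\ge1$, $R\circ^{(k)}T$ is the set of $(a,b)$ with $c_0=a,\dots,c_k=b$, $(c_i,c_{i+1})\in R$ for $i$ even, $\in T$ for $i$ odd; $\circ=\circ^{(2)}$, $R+T=\bigcup_k R\circ^{(k)}T$, $\wedge$ is intersection. For a $\{\wedge,\circ,+\}$-term $q$, $q^{(k)}$ is the $\{\wedge,\circ\}$-term obtained by replacing each occurrence of $+$ by $\circ^{(k)}$ (i.e. $u\circ v\circ u\circ\cdots$ with $k$ factors). Graph of a $\{\wedge,\circ\}$-term $p$: start with vertices $y_1,y_2$ and one edge $(y_1,y_2)$ labelled $p$; repeatedly pick an edge $(y_j,y_k)$ whose label $w$ is not a variable; if $w=u\wedge v$ replace it by two edges $(y_j,y_k)$ labelled $u$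 and $v$; if $w=u\circ v$ add a new vertex $y_t$ and replace the edge by $(y_j,y_t)$ labelled $u$ and $(y_t,y_k)$ labelled $v$. Stop when all labels are variables; the result is $\mathbf{G}(p)$, with vertices $y_1,\dots,y_m$. Given $\{\wedge,\circ\}$-terms $p,q$ in variables $X_1,\dots,X_n$: let $y_1,\dots,y_m$ be the vertices of $\mathbf{G}(p)$ and $z_1,\dots,z_u$ those of $\mathbf{G}(q)$ ($z_1,z_2$ initial). Set $T_s(p)=\{(x_i,x_j): (y_i,y_j)\text{ an edge of }\mathbf{G}(p)\text{ labelled }X_s\}$ (variables $x_1,\dots,x_m$). Associate to $z_i$ an $m$-ary term $t_i$, where $t_1=x_1$, $t_2=x_2$ and $t_3,\dots,t_u$ are unknown $m$-ary operation symbols; $Tt_s(q)=\{(t_i,t_j): (z_i,z_j)\text{ an edge of }\mathbf{G}(q)\text{ labelled }X_s\}$. Let $c(s)=|T_s(p)|$ and list $T_s(p)=\{(x_{i_1},x_{j_1}),\dots,(x_{i_{c(s)}},x_{j_{c(s)}})\}$. $\mathrm{Eq}^R(p\le q)$ consists, for every $s$ and every $(t_i,t_j)\in Tt_s(q)$, of a new unknown $(m+c(s))$-ary symbol $t_{(i,j,s)}$ and the two equations $t_{(i,j,s)}(x_1,\dots,x_m,x_{i_1},\dots,x_{i_{c(s)}})\approx t_i(x_1,\dots,x_m)$ and $t_{(i,j,s)}(x_1,\dots,x_m,x_{j_1},\dots,x_{j_{c(s)}})\approx t_j(x_1,\dots,x_m)$. A variety realizes this set if the unknown symbols can be interpreted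 as terms of the variety so that all equations hold identically in it. *)

From mathcomp Require Import all_boot.
Set Implicit Arguments. Unset Strict Implicit. Unset Printing Implicit Defensive.

Record signature := Signature { sym : Type; ar : sym -> nat }.

Inductive term (S : signature) (V : Type) : Type :=
| Var of V
| App (f : sym S) of ('I_(ar f) -> term S V).
Arguments Var {S V}.
Arguments App {S V}.

Record algebra (S : signature) := Algebra {
  carrier :> Type;
  op : forall f : sym S, ('I_(ar f) -> carrier) -> carrier }.

Fixpoint eval (S : signature) (A : algebra S) (V : Type) (env : V -> A)
    (t : term S V) : A :=
  match t with
  | Var v => env v
  | App f args => @op S A f (fun i => eval env (args i))
  end.

(* A variety is given by a set of identities Sigma (Birkhoff): its members are
   the algebras satisfying every identity of Sigma. *)
Definition identities (S : signature) := term S nat -> term S nat -> Prop.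

Definition in_variety (S : signature) (Sigma : identities S) (A : algebra S) :=
  forall s t, Sigma s t -> forall env : nat -> A, eval env s = eval env t.

Definition compatible (S : signature) (A : algebra S) (R : A -> A -> Prop) :=
  forall (f : sym S) (a b : 'I_(ar f) -> A),
    (forall i, R (a i) (b i)) -> R (@op S A f a) (@op S A f b).

Definition reflexiveP (A : Type) (R : A -> A -> Prop) := forall x, R x x.

Definition Crr (S : signature) (A : algebra S) (R : A -> A -> Prop) :=
  compatible R /\ reflexiveP R.

Inductive rterm (n : nat) : Type :=
| RVar of 'I_n
| RMeet of rterm n & rterm n
| RComp of rterm n & rterm n
| RPlus of rterm n & rterm n.
Arguments RVar {n}.
Arguments RMeet {n}.
Arguments RComp {n}.
Arguments RPlus {n}.

Fixpoint plus_free (n : nat) (t : rterm n) : bool :=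
  match t with
  | RVar _ => true
  | RMeet u v | RComp u v => plus_free u && plus_free v
  | RPlus _ _ => false
  end.

Fixpoint circk (A : Type) (k : nat) (R T : A -> A -> Prop) : A -> A -> Prop :=
  match k with
  | 0 => fun a b => a = b
  | k'.+1 => fun a b => exists c, R a c /\ circk k' T R c b
  end.

Fixpoint interp (n : nat) (A : Type) (R : 'I_n -> A -> A -> Prop) (t : rterm n)
    : A -> A -> Prop :=
  match t with
  | RVar i => R i
  | RMeet u v => fun a b => interp R u a b /\ interp R v a b
  | RComp u v => circk 2 (interp R u) (interp R v)
  | RPlus u v => fun a b => exists k, 1 <= k /\ circk k (interp R u) (interp R v) a b
  end.

Definition sat_Crr (S : signature) (Sigma : identities S) (n : nat)
    (p q : rterm n) :=
  forall A : algebra S, in_variety Sigma A ->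
  forall R : 'I_n -> A -> A -> Prop, (forall i, Crr (R i)) ->
  forall a b : A, interp R p a b -> interp R q a b.

Fixpoint circ_term (n : nat) (k : nat) (u v : rterm n) : rterm n :=
  match k with
  | 0 => u
  | 1 => u
  | k'.+1 => RComp u (circ_term k' v u)
  end.

Fixpoint qk (n : nat) (k : nat) (t : rterm n) : rterm n :=
  match t with
  | RVar i => RVar i
  | RMeet u v => RMeet (qk k u) (qk k v)
  | RComp u v => RComp (qk k u) (qk k v)
  | RPlus u v => circ_term k (qk k u) (qk k v)
  end.

(* Vertices are numbered 0, 1, 2, ... (0, 1 are the initial vertices y_1, y_2);
   edges are triples (source, target, variable label).  [gr t src tgt next]
   expands an edge (src,tgt) labelled t, new vertices numbered from [next];
   it returns the next free vertex number and the list of edges.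
   (The RPlus case is never used: G is only applied to +-free terms.) *)
Fixpoint gr (n : nat) (t : rterm n) (src tgt next : nat)
    : nat * seq (nat * nat * 'I_n) :=
  match t with
  | RVar s => (next, [:: (src, tgt, s)])
  | RMeet u v =>
      let r1 := gr u src tgt next in
      let r2 := gr v src tgt r1.1 in
      (r2.1, r1.2 ++ r2.2)
  | RComp u v | RPlus u v =>
      let r1 := gr u src next next.+1 in
      let r2 := gr v next tgt r1.1 in
      (r2.1, r1.2 ++ r2.2)
  end.

Definition nverts (n : nat) (t : rterm n) : nat := (gr t 0 1 2).1.
Definition gedges (n : nat) (t : rterm n) : seq (nat * nat * 'I_n) :=
  (gr t 0 1 2).2.

Definition Ts (n : nat) (p : rterm n) (s : 'I_n) : seq (nat * nat) :=
  [seq (e.1.1, e.1.2) | e <- gedges p & e.2 == s].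

(* Value of t_i(x_1..x_m) under a valuation a of the x's, where t_1 = x_1,
   t_2 = x_2 (vertices 0 and 1) and t_i is the m-ary term tv i otherwise. *)
Definition tval (S : signature) (A : algebra S) (m : nat)
    (tv : nat -> term S 'I_m) (i : nat) (a : nat -> A) : A :=
  if i == 0 then a 0 else if i == 1 then a 1
  else eval (fun j : 'I_m => a (nat_of_ord j)) (tv i).

(* Valuation of the m + c variables of t_(i,j,s): the first m are x_1..x_m,
   the remaining c are x_{i_1},...,x_{i_c} (proj = fst) or
   x_{j_1},...,x_{j_c} (proj = snd). *)
Definition ext_env (A : Type) (m : nat) (L : seq (nat * nat))
    (proj : nat * nat -> nat) (a : nat -> A) : 'I_(m + size L) -> A :=
  fun v => match split v with
           | inl j => a (nat_of_ord j)
           | inr l => a (proj (nth (0, 0) L l))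
           end.

Definition realizes (S : signature) (Sigma : identities S) (n : nat)
    (p q : rterm n) : Prop :=
  let m := nverts p in
  exists tv : nat -> term S 'I_m,
  forall (i j : nat) (s : 'I_n), (i, j, s) \in gedges q ->
  exists te : term S 'I_(m + size (Ts p s)),
  forall A : algebra S, in_variety Sigma A ->
  forall a : nat -> A,
    eval (@ext_env A m (Ts p s) fst a) te = tval tv i a /\
    eval (@ext_env A m (Ts p s) snd a) te = tval tv j a.

From Pilot Require Import Defs.
From mathcomp Require Import all_boot zify.
From Stdlib Require Import FunctionalExtensionality PropExtensionality.
From Stdlib Require Import ProofIrrelevance ClassicalEpsilon.
Set Implicit Arguments. Unset Strict Implicit.

Section Graph.
Variables (n : nat) (A : Type) (R : 'I_n -> A -> A -> Prop).

Definition edges_hold (val : nat -> A) (l : seq (nat * nat * 'I_n)) :=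
  forall e, e \in l -> R e.2 (val e.1.1) (val e.1.2).

Lemma edges_hold_cat val l1 l2 :
  edges_hold val (l1 ++ l2) <-> edges_hold val l1 /\ edges_hold val l2.
Proof.
split=> [H | [H1 H2] e].
  by split=> e He; apply: H; rewrite mem_cat He ?orbT.
by rewrite mem_cat => /orP [] He; [exact: H1 | exact: H2].
Qed.

Lemma gr_bounds (t : rterm n) src tgt next :
  src < next -> tgt < next ->
  let r := gr t src tgt next in
  next <= r.1 /\ forall e, e \in r.2 -> e.1.1 < r.1 /\ e.1.2 < r.1.
Proof.
elim: t src tgt next => [s|u IHu v IHv|u IHu v IHv|u IHu v IHv] src tgt next hs ht /=.
- by split=> // e; rewrite inE => /eqP ->.
- have [h1 r1] := IHu src tgt next hs ht.
  have [h2 r2] := IHv src tgt _ (leq_trans hs h1) (leq_trans ht h1).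
  split=> [|e]; first exact: leq_trans h2.
  rewrite mem_cat => /orP [] He; last exact: r2.
  by have [a b] := r1 e He; split; apply: leq_trans h2.
all: have [h1 r1] := IHu src next next.+1 (leqW hs) (ltnSn next).
all: have [h2 r2] := IHv next tgt _ h1 (leq_trans ht (ltnW h1)).
all: split=> [|e]; first exact: leq_trans (ltnW h1) h2.
all: rewrite mem_cat => /orP [] He; last exact: r2.
all: by have [a b] := r1 e He; split; apply: leq_trans h2.
Qed.

Lemma interp_of_edges (t : rterm n) src tgt next val :
  plus_free t -> edges_hold val (gr t src tgt next).2 ->
  interp R t (val src) (val tgt).
Proof.
elim: t src tgt next => [s|u IHu v IHv|u IHu v IHv|u IHu v IHv] src tgt next //= hp.
- by move=> H; apply: (H (src, tgt, s)); rewrite inE.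
- case/andP: hp => pu pv /edges_hold_cat [H1 H2].
  by split; [exact: IHu H1 | exact: IHv H2].
- case/andP: hp => pu pv /edges_hold_cat [H1 H2].
  by exists (val next); split; [exact: IHu H1 | exists (val tgt); split; [exact: IHv H2|]].
Qed.

Lemma edges_of_interp (t : rterm n) src tgt next val0 :
  plus_free t -> src < next -> tgt < next -> interp R t (val0 src) (val0 tgt) ->
  exists2 val, (forall v, v < next -> val v = val0 v) &
               edges_hold val (gr t src tgt next).2.
Proof.
elim: t src tgt next val0 => [s|u IHu v IHv|u IHu v IHv|u IHu v IHv] src tgt next val0
  //= hp hs ht.
- by move=> H; exists val0 => // e; rewrite inE => /eqP ->.
- case/andP: hp => pu pv [H1 H2].
  have [val1 e1 ok1] := IHu src tgt next val0 pu hs ht H1.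
  have [h1 r1] := gr_bounds u hs ht.
  have H2' : interp R v (val1 src) (val1 tgt) by rewrite !e1.
  have [val2 e2 ok2] := IHv src tgt _ val1 pv (leq_trans hs h1) (leq_trans ht h1) H2'.
  exists val2 => [w hw|]; first by rewrite e2 ?e1 // (leq_trans hw h1).
  apply/edges_hold_cat; split=> // e He.
  by have [b1 b2] := r1 e He; rewrite !e2 //; exact: ok1.
- case/andP: hp => pu pv [c [H1 [d [H2 Hd]]]]; subst d.
  (* the middle vertex [next] receives the intermediate point [c] *)
  pose val0' (w : nat) := if w == next then c else val0 w.
  have old w : w < next -> val0' w = val0 w.
    by rewrite /val0'; case: eqVneq => // ->; rewrite ltnn.
  have H1' : interp R u (val0' src) (val0' next) by rewrite old // /val0' eqxx.
  have [val1 e1 ok1] := IHu src next next.+1 val0' pu (leqW hs) (ltnSn next) H1'.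
  have [h1 r1] := gr_bounds u (leqW hs) (ltnSn next).
  have H2' : interp R v (val1 next) (val1 tgt).
    by rewrite (e1 next (ltnSn next)) (e1 tgt (leqW ht)) (old tgt ht) /val0' eqxx.
  have [val2 e2 ok2] := IHv next tgt _ val1 pv h1 (leq_trans ht (ltnW h1)) H2'.
  exists val2 => [w hw|]; first by rewrite e2 ?e1 ?old //; lia.
  apply/edges_hold_cat; split=> // e He.
  by have [b1 b2] := r1 e He; rewrite !e2 //; exact: ok1.
Qed.
End Graph.

Lemma circk_mono (A : Type) k (U U' V V' : A -> A -> Prop) :
  (forall x y, U x y -> U' x y) -> (forall x y, V x y -> V' x y) ->
  forall x y, circk k U V x y -> circk k U' V' x y.
Proof.
elim: k U U' V V' => [|k IH] U U' V V' hU hV x y //= [c [h1 h2]].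
by exists c; split; [exact: hU | exact: IH h2].
Qed.

Lemma circ_term_chain n (A : Type) (R : 'I_n -> A -> A -> Prop) k (u v : rterm n) x y :
  interp R (circ_term k u v) x y ->
  exists2 k', 1 <= k' & circk k' (interp R u) (interp R v) x y.
Proof.
elim: k u v x y => [|[|k] IH] u v x y /=; try by move=> H; exists 1 => //; exists y.
move=> [c [H1 [d [H2 Hd]]]]; subst d.
by have [k' hk H] := IH v u c y H2; exists k'.+1 => //; exists c.
Qed.

Lemma qk_sub n (A : Type) (R : 'I_n -> A -> A -> Prop) k (t : rterm n) x y :
  interp R (qk k t) x y -> interp R t x y.
Proof.
elim: t x y => [s|u IHu v IHv|u IHu v IHv|u IHu v IHv] x y //=.
- by move=> [h1 h2]; split; [exact: IHu | exact: IHv].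
- exact: (circk_mono (k := 2) IHu IHv).
- by move=> H; have [k' hk H'] := circ_term_chain H; exists k'; split=> //; exact: circk_mono H'.
Qed.

Lemma plus_free_qk n k (t : rterm n) : plus_free (qk k t).
Proof.
have circ_free (u v : rterm n) : plus_free u -> plus_free v -> plus_free (circ_term k u v).
  by elim: k u v => [|[|k] IH] u v hu hv //=; rewrite hu IH.
by elim: t => [s|u IHu v IHv|u IHu v IHv|u IHu v IHv] //=; rewrite ?IHu ?IHv ?circ_free.
Qed.

Section Reflexive.
Variables (n : nat) (A : Type) (R : 'I_n -> A -> A -> Prop).
Hypothesis R_refl : forall i, reflexiveP (R i).

Lemma interp_refl (t : rterm n) x : interp R t x x.
Proof.
elim: t x => [s|u IHu v IHv|u IHu v IHv|u IHu v IHv] x //=.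
- exact: R_refl.
- by exists x; split=> //; exists x.
- by exists 1; split=> //; exists x.
Qed.

(* On reflexive relations, chains of length k' <= k can be padded to length
   k, so [u o^(k') v] is contained in [circ_term k u v]. *)
Lemma circ_term_pad (u v : rterm n) k k' x y :
  1 <= k' <= k -> circk k' (interp R u) (interp R v) x y ->
  interp R (circ_term k u v) x y.
Proof.
elim: k u v k' x y => [|k IH] u v [|k'] x y hk //= [c [H1 H2]].
case: k IH hk => [|k] IH hk /=.
  have k'0 : k' = 0 by lia.
  by subst k'; move: H2 => /= <-.
exists c; split=> //; exists y; split=> //.
case: k' hk H2 => [|k'] hk H2; last exact: (IH v u k'.+1).
by move: H2 => /= <-; apply: interp_refl.
Qed.

Definition eventually (P : nat -> Prop) := exists k0, forall k, k0 <= k -> P k.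

Lemma eventually_and (P Q : nat -> Prop) :
  eventually P -> eventually Q -> eventually (fun k => P k /\ Q k).
Proof.
move=> [k1 h1] [k2 h2]; exists (maxn k1 k2) => k hk.
by split; [apply: h1 | apply: h2]; lia.
Qed.

(* Chains of eventually-valid steps are eventually valid (finitely many
   steps, so take the largest threshold). *)
Lemma circk_eventually (U V : nat -> A -> A -> Prop) (U0 V0 : A -> A -> Prop) :
  (forall x y, U0 x y -> eventually (fun k => U k x y)) ->
  (forall x y, V0 x y -> eventually (fun k => V k x y)) ->
  forall k' x y, circk k' U0 V0 x y -> eventually (fun k => circk k' (U k) (V k) x y).
Proof.
move=> hU hV k'; elim: k' U V U0 V0 hU hV => [|k' IH] U V U0 V0 hU hV x y /=.
  by move=> ->; exists 0.
move=> [c [H1 H2]].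
have [k0 h] := eventually_and (hU _ _ H1) (IH V U V0 U0 hV hU _ _ H2).
by exists k0 => k /h [h1 h2]; exists c.
Qed.

Lemma qk_eventually (t : rterm n) x y :
  interp R t x y -> eventually (fun k => interp R (qk k t) x y).
Proof.
elim: t x y => [s|u IHu v IHv|u IHu v IHv|u IHu v IHv] x y /=.
- by exists 0.
- by move=> [/IHu h1 /IHv h2]; exact: eventually_and h1 h2.
- exact: (@circk_eventually (fun k => interp R (qk k u)) (fun k => interp R (qk k v))
            _ _ IHu IHv 2).
- move=> [k' [hk /(@circk_eventually (fun k => interp R (qk k u))
                                    (fun k => interp R (qk k v)) _ _ IHu IHv) [k0 H0]]].
  exists (maxn k0 k') => k hk'.
  by apply: (circ_term_pad (k' := k')); [lia | apply: H0; lia].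
Qed.
End Reflexive.

Fixpoint subst (S : signature) (V W : Type) (sg : V -> term S W) (t : term S V)
    : term S W :=
  match t with
  | Var v => sg v
  | App f args => App f (fun i => subst sg (args i))
  end.

Lemma subst_Var (S : signature) (V : Type) (t : term S V) : subst Var t = t.
Proof.
elim: t => [v|f args IH] //=; congr App; exact: functional_extensionality.
Qed.

Lemma eval_ext (S : signature) (A : algebra S) (V : Type) (e1 e2 : V -> A) t :
  (forall v, e1 v = e2 v) -> eval e1 t = eval e2 t.
Proof.
move=> h; elim: t => [v|f args IH] //=.
by congr op; apply: functional_extensionality.
Qed.

Lemma eval_subst (S : signature) (A : algebra S) (V W : Type) (e : W -> A)
    (sg : V -> term S W) t :
  eval e (subst sg t) = eval (fun v => eval e (sg v)) t.
Proof.
elim: t => [v|f args IH] //=.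
by congr op; apply: functional_extensionality.
Qed.

Lemma eval_compat (S : signature) (A : algebra S) (V : Type) (R : A -> A -> Prop)
    (e1 e2 : V -> A) t :
  compatible R -> (forall v, R (e1 v) (e2 v)) -> R (eval e1 t) (eval e2 t).
Proof. by move=> hc h; elim: t => [v|f args IH] //=; apply: hc. Qed.

Lemma ext_env_comp (A B : Type) m L (proj : nat * nat -> nat) (f : A -> B) (b : nat -> A) v :
  ext_env (m := m) (L := L) proj (fun w => f (b w)) v = f (ext_env proj b v).
Proof. by rewrite /ext_env; case: split. Qed.

Lemma ext_env_lshift (A : Type) m L (proj : nat * nat -> nat) (b : nat -> A) (j : 'I_m) :
  ext_env (m := m) (L := L) proj b (lshift (size L) j) = b j.
Proof. by rewrite /ext_env (unsplitK (inl j)). Qed.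

Lemma ext_env_rshift (A : Type) m L (proj : nat * nat -> nat) (b : nat -> A)
    (l : 'I_(size L)) :
  ext_env (m := m) (L := L) proj b (rshift m l) = b (proj (nth (0, 0) L l)).
Proof. by rewrite /ext_env (unsplitK (inr l)). Qed.

Lemma Ts_edge n (p : rterm n) s x : x \in Ts p s -> (x.1, x.2, s) \in gedges p.
Proof.
rewrite /Ts => /mapP [[[i j] s']]; rewrite mem_filter => /andP [/eqP /= -> he] ->.
exact: he.
Qed.

Lemma realizes_sound (S : signature) (Sigma : identities S) n (p Q : rterm n) :
  plus_free p -> plus_free Q -> realizes Sigma p Q -> sat_Crr Sigma p Q.
Proof.
move=> hp hQ [tv Htv] A hA R hR a b Hab.
have [val val01 ok] :=
  @edges_of_interp n A R p 0 1 2 (fun v => if v == 0 then a else b) hp erefl erefl Hab.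
pose c i := Defs.tval tv i val.
have okQ : edges_hold R c (gedges Q).
  move=> [[i j] s] /Htv [te /(_ A hA val) [h1 h2]]; rewrite /= /c -h1 -h2.
  apply: eval_compat => [|v]; first exact: (hR s).1.
  rewrite /ext_env; case: (split v) => [k|l]; first exact: (hR s).2.
  exact: ok (Ts_edge (mem_nth (0, 0) (ltn_ord l))).
by have := interp_of_edges hQ okQ; rewrite /c /Defs.tval /= !val01.
Qed.

Section FreeAlgebra.
Variables (S : signature) (Sigma : identities S) (m : nat).

Definition equivT (t t' : term S 'I_m) : Prop :=
  forall A : algebra S, in_variety Sigma A ->
  forall env : 'I_m -> A, eval env t = eval env t'.

Definition tclass (t : term S 'I_m) : term S 'I_m -> Prop := equivT t.

Definition free_carrier := {P : term S 'I_m -> Prop | exists t, P = tclass t}.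

Definition mk (t : term S 'I_m) : free_carrier := exist _ (tclass t) (ex_intro _ t erefl).

Definition rep (x : free_carrier) : term S 'I_m :=
  proj1_sig (constructive_indefinite_description _ (proj2_sig x)).

Lemma free_carrier_eq (x y : free_carrier) : proj1_sig x = proj1_sig y -> x = y.
Proof.
case: x y => [P hP] [P' hP'] /= e; subst P'.
by rewrite (proof_irrelevance _ hP hP').
Qed.

Lemma mk_eq t t' : mk t = mk t' <-> equivT t t'.
Proof.
split=> [e | h].
  have : tclass t' t' by [].
  by rewrite -[tclass t']/(proj1_sig (mk t')) -e.
apply: free_carrier_eq; apply: functional_extensionality => t''.
by apply: propositional_extensionality; split=> h' A hA env; rewrite -h' ?h.
Qed.

Lemma mk_rep x : mk (rep x) = x.
Proof.
case: x => P hP; apply: free_carrier_eq; rewrite /rep /=.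
by case: constructive_indefinite_description => t /= et; rewrite et.
Qed.

Lemma rep_mk t : equivT (rep (mk t)) t.
Proof. by apply/mk_eq; rewrite mk_rep. Qed.

Definition free_op (f : sym S) (args : 'I_(ar f) -> free_carrier) : free_carrier :=
  mk (App f (fun i => rep (args i))).

Definition free_algebra : algebra S := @Algebra S free_carrier free_op.

Lemma eval_free (V : Type) (env : V -> free_algebra) t :
  eval env t = mk (subst (fun v => rep (env v)) t).
Proof.
elim: t => [v|f args IH] /=; first by rewrite mk_rep.
apply/mk_eq => A hA env' /=; congr op; apply: functional_extensionality => i.
by rewrite IH; apply: rep_mk.
Qed.

Lemma eval_classes (V : Type) (sg : V -> term S 'I_m) t :
  eval (fun v => mk (sg v) : free_algebra) t = mk (subst sg t).
Proof.
rewrite eval_free; apply/mk_eq => A hA env; rewrite !eval_subst.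
by apply: eval_ext => v; apply: rep_mk.
Qed.

(* The free algebra belongs to V: identities of Sigma hold after any
   substitution, hence between the substituted representatives. *)
Lemma free_in_variety : in_variety Sigma free_algebra.
Proof.
move=> s t hst env; rewrite !eval_free; apply/mk_eq => A hA env'.
by rewrite !eval_subst; apply: hA.
Qed.
End FreeAlgebra.

Section Completeness.
Variables (S : signature) (Sigma : identities S) (n : nat) (p : rterm n).
Hypothesis p_plus_free : plus_free p.

Local Notation m := (nverts p).
Local Notation F := (free_algebra Sigma m).

Lemma nverts_ge2 : 2 <= m.
Proof. by have [] := @gr_bounds n p 0 1 2 erefl erefl. Qed.

Lemma Ts_bounds s x : x \in Ts p s -> x.1 < m /\ x.2 < m.
Proof. by move/Ts_edge; have [_] := @gr_bounds n p 0 1 2 erefl erefl; apply. Qed.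

(* The variable x_v as an m-ary term (a default one when v >= m). *)
Definition gvar (v : nat) : term S 'I_m :=
  Var (insubd (Ordinal (leq_trans (isT : 0 < 2) nverts_ge2)) v).

Lemma eval_gvar (A : algebra S) (a : nat -> A) v :
  v < m -> eval (fun j : 'I_m => a j) (gvar v) = a v.
Proof. by move=> hv; rewrite /= val_insubd hv. Qed.

Definition gen (v : nat) : F := mk Sigma (gvar v).

Definition gen_rel (s : 'I_n) (x y : F) : Prop :=
  exists te : term S 'I_(m + size (Ts p s)),
    eval (ext_env (L := Ts p s) fst gen) te = x /\
    eval (ext_env (L := Ts p s) snd gen) te = y.

Lemma eval_ext_gen s proj (te : term S 'I_(m + size (Ts p s))) :
  eval (ext_env (L := Ts p s) proj gen) te =
  mk Sigma (subst (ext_env (L := Ts p s) proj gvar) te).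
Proof.
rewrite -eval_classes; apply: eval_ext => v.
exact: (ext_env_comp proj (@mk S Sigma m) gvar).
Qed.

(* R_s is compatible (apply an operation to the witnessing terms) and
   reflexive (use a term in x_1, ..., x_m only). *)
Lemma gen_rel_Crr s : Crr (gen_rel s).
Proof.
split=> [f x y h | x].
  have [te hte] : exists te : 'I_(ar f) -> term S 'I_(m + size (Ts p s)),
      forall i, eval (ext_env fst gen) (te i) = x i /\ eval (ext_env snd gen) (te i) = y i.
    exists (fun i => proj1_sig (constructive_indefinite_description _ (h i))) => i.
    by case: constructive_indefinite_description.
  exists (App f te); split=> /=; f_equal; apply: functional_extensionality => i.
    exact: (hte i).1.
  exact: (hte i).2.
have diag proj : eval (ext_env (L := Ts p s) proj gen)
                      (subst (fun j => Var (lshift _ j)) (rep x)) = x.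
  rewrite eval_subst /=; under eval_ext => j do rewrite ext_env_lshift /gen /gvar valKd.
  by rewrite eval_classes subst_Var mk_rep.
by exists (subst (fun j => Var (lshift _ j)) (rep x)); rewrite !diag.
Qed.

(* p holds at (x_1, x_2): the generators themselves satisfy G(p). *)
Lemma p_holds_at_gen : interp gen_rel p (gen 0) (gen 1).
Proof.
apply: (@interp_of_edges n F gen_rel p 0 1 2 gen p_plus_free) => -[[i j] s] He /=.
have hin : (i, j) \in Ts p s by apply/mapP; exists (i, j, s); rewrite ?mem_filter ?eqxx.
have hl : index (i, j) (Ts p s) < size (Ts p s) by rewrite index_mem.
by exists (Var (rshift m (Ordinal hl))); rewrite /= !ext_env_rshift /= nth_index.
Qed.

Lemma transfer s proj (te : term S 'I_(m + size (Ts p s))) u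
    (A : algebra S) (a : nat -> A) :
  in_variety Sigma A -> (forall x, x \in Ts p s -> proj x < m) ->
  eval (ext_env (L := Ts p s) proj gen) te = mk Sigma u ->
  eval (ext_env (L := Ts p s) proj a) te = eval (fun j : 'I_m => a j) u.
Proof.
move=> hA hproj; rewrite eval_ext_gen => /mk_eq /(_ A hA (fun j : 'I_m => a j)) <-.
rewrite eval_subst; apply: eval_ext => v; rewrite -ext_env_comp /ext_env.
case: (split v) => [j|l]; first by rewrite eval_gvar.
by rewrite eval_gvar // hproj // mem_nth.
Qed.

Lemma realizes_complete (Q : rterm n) :
  plus_free Q -> interp gen_rel Q (gen 0) (gen 1) -> realizes Sigma p Q.
Proof.
move=> hQ H.
have [c c01 okQ] := @edges_of_interp n F gen_rel Q 0 1 2 gen hQ erefl erefl H.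
exists (fun i => rep (c i)) => i j s /okQ /= [te [h1 h2]].
(* every vertex value is the class of a term computing t_i *)
have vertex_class k : exists2 u, c k = mk Sigma u &
    forall (A : algebra S) (a : nat -> A),
      eval (fun j : 'I_m => a j) u = Defs.tval (fun i => rep (c i)) k a.
  case: (ltnP k 2) => hk.
    exists (gvar k); first by rewrite c01.
    move=> A a; rewrite eval_gvar ?(leq_trans hk nverts_ge2) // /Defs.tval.
    by case: k hk => [|[|]].
  exists (rep (c k)); first by rewrite mk_rep.
  by move=> A a; rewrite /Defs.tval; case: k hk => [|[|]].
exists te => A hA a.
have [ui hci hui] := vertex_class i; have [uj hcj huj] := vertex_class j.
have fst_lt x : x \in Ts p s -> x.1 < m by case/Ts_bounds.
have snd_lt x : x \in Ts p s -> x.2 < m by case/Ts_bounds.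
rewrite -hui -huj; split.
- by apply: (@transfer s fst te ui A a hA fst_lt); rewrite h1 hci.
- by apply: (@transfer s snd te uj A a hA snd_lt); rewrite h2 hcj.
Qed.

Lemma sat_at_gen q : sat_Crr Sigma p q -> interp gen_rel q (gen 0) (gen 1).
Proof.
by move/(_ F (@free_in_variety S Sigma m) gen_rel gen_rel_Crr); apply; apply: p_holds_at_gen.
Qed.
End Completeness.

Theorem proposition4p5 (S : signature) (Sigma : identities S) (n : nat)
    (p q : rterm n) :
  plus_free p ->
  (sat_Crr Sigma p q <-> exists k : nat, 2 <= k /\ realizes Sigma p (qk k q)) /\
  (plus_free q -> (sat_Crr Sigma p q <-> realizes Sigma p q)).
Proof.
move=> hp; split; last first.
  move=> hq; split=> [/(sat_at_gen hp) hgen | ]; first exact: realizes_complete hq hgen.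
  exact: realizes_sound.
split=> [/(sat_at_gen hp) hgen | [k [_ hr]] A hA R hR a b Hab].
  (* q holds at the generators, hence so does q^(k) for k large *)
  have [k0 hk0] := qk_eventually (fun s => (gen_rel_Crr Sigma p s).2) hgen.
  exists (maxn k0 2); split; first by rewrite leq_maxr.
  by apply: realizes_complete (plus_free_qk _ _) _; apply: hk0; rewrite leq_maxl.
(* the realization gives p <= q^(k), and q^(k) <= q *)
apply: (qk_sub (k := k)).
exact: (realizes_sound hp (plus_free_qk k q) hr hA hR Hab).
Qed.
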